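(* For any integer $g\ge 0$, \[\sum_{S\in\mathcal{B}(g)}t_2(S)\le F_{g+4},\] where $F_n$ is the $n$-th Fibonacci number ($F_1=F_2=1$, $F_{n+2}=F_{n+1}+F_n$).
   Context: A numerical semigroup $S$ is a submonoid of $\mathbb{N}_0$ with finite complement $\mathcal{H}(S)$; its genus is $|\mathcal{H}(S)|$, $m=m(S)$ its smallest nonzero element and $F=F(S)=\max\mathcal{H}(S)$. The type $t(S)$ is the number of $P\in\mathcal{H}(S)$ with $P+s\in S$ for all $s\in S\setminus\{0\}$. Define $t_1(S)=\#(\mathcal{H}(S)\cap[F-m+1,F])$ and $t_2(S)=t(S)-t_1(S)$. $\mathcal{B}(g)$ is the set of numerical semigroups $S$ of genus $g$ with $F(S)<2m(S)$. *)

(* A numerical semigroup S is represented by its gap set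
   H(S) = N \ S, given as a strictly increasing list of naturals
   (canonical representation: two such lists are equal iff the
   semigroups are equal). S itself is the predicate (fun n => n \notin H). *)
From mathcomp Require Import all_boot.
Set Implicit Arguments. Unset Strict Implicit. Unset Printing Implicit Defensive.

(* H is the gap set of a numerical semigroup: S := N \ H contains 0
   and is closed under addition (finiteness of H is automatic). *)
Definition is_gapset (H : seq nat) : Prop :=
  [/\ sorted ltn H, 0 \notin H &
      forall a b, a \notin H -> b \notin H -> a + b \notin H].

Definition genus (H : seq nat) : nat := size H.

(* Frobenius number F(S) = max H(S) (only used when H is nonempty;
   for H empty, i.e. S = N, F = -1 by convention, see in_B). *)
Definition frob (H : seq nat) : nat := \max_(h <- H) h.

(* multiplicity m(S): smallest nonzero element of S.  It is at most F+1,
   so searching in [0, F+1] suffices (index in iota 0 _ = value). *)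
Definition mult (H : seq nat) : nat :=
  find (fun n => (0 < n) && (n \notin H)) (iota 0 (frob H).+2).

(* P in H(S) is pseudo-Frobenius iff P + s \in S for all s \in S \ {0}.
   For s > F we have P + s > F, hence P + s \in S automatically, so it
   suffices to check 1 <= s <= F. *)
Definition pseudo_frob (H : seq nat) (P : nat) : bool :=
  (P \in H) && all (fun s => (s \in H) || (P + s \notin H)) (iota 1 (frob H)).

Definition type_ns (H : seq nat) : nat := count (pseudo_frob H) H.

(* t_1(S) = #(H(S) \cap [F - m + 1, F]);  note m <= F + 1 so F + 1 - m is
   exact. *)
Definition t1 (H : seq nat) : nat :=
  count (fun h => (frob H + 1 - mult H <= h) && (h <= frob H)) H.

(* t_2(S) = t(S) - t_1(S)  (t_1 <= t always, so truncation is harmless) *)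
Definition t2 (H : seq nat) : nat := type_ns H - t1 H.

(* S \in B(g): genus g and F(S) < 2 m(S) (vacuous when S = N, F = -1). *)
Definition in_B (g : nat) (H : seq nat) : Prop :=
  [/\ is_gapset H, genus H = g & (H = [::] \/ frob H < 2 * mult H)].

Fixpoint fib (n : nat) : nat :=
  match n with
  | 0 => 0
  | 1 => 1
  | (m.+1 as k).+1 => fib k + fib m
  end.

From mathcomp Require Import all_boot zify.
Set Implicit Arguments. Unset Strict Implicit. Unset Printing Implicit Defensive.

(* Each pair (S, P) with S in B(g) and P a pseudo-Frobenius number counted by
   t_2(S) is encoded injectively as a word over letters of weight 1 and 2 of
   total weight g + 3; there are F_{g+4} such words.  Since F < 2m, S is
   determined by m, F and the bits x_i = [m + i \in S] for 0 < i < F - m.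
   Writing an element as a letter of weight 1 and a gap as one of weight 2,
   these bits weigh (F - m - 1) + (g - m); a final 2 followed by 2m - F - 1
   ones records m and F and brings the weight to g.  Recording P costs 3 more:
   as P + s \in S for every s \in S, no pair (x_b, x_(b+P)) is (element, gap),
   so the bits written in such pairs, up to one (element, gap) marker, reveal P. *)

Definition letter_weight (b : bool) : nat := if b then 1 else 2.

Definition weight (s : seq bool) : nat := \sum_(b <- s) letter_weight b.

Lemma weight_cons b s : weight (b :: s) = letter_weight b + weight s.
Proof. exact: big_cons. Qed.

Lemma weight_cat s1 s2 : weight (s1 ++ s2) = weight s1 + weight s2.
Proof. exact: big_cat. Qed.

Lemma weight_map_index_iota (x : nat -> bool) a b :
  weight [seq x i | i <- index_iota a b] = \sum_(a <= i < b) letter_weight (x i).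
Proof. exact: big_map. Qed.

Lemma weightE s : weight s = size s + count negb s.
Proof.
elim: s => [|b s IH]; first by rewrite /weight big_nil.
by rewrite weight_cons IH; case: b => /=; lia.
Qed.

Fixpoint words (n : nat) : seq (seq bool) :=
  if n is n'.+1 then
    map (cons true) (words n') ++
    (if n' is n''.+1 then map (cons false) (words n'') else [::])
  else [:: [::]].

Lemma wordsS n : words n.+1 =
  map (cons true) (words n) ++ (if n is n'.+1 then map (cons false) (words n') else [::]).
Proof. by []. Qed.

Lemma size_words n : size (words n) = fib n.+1.
Proof.
suff [] : size (words n) = fib n.+1 /\ size (words n.+1) = fib n.+2 by [].
elim: n => [|n [IHn IHn1]] //; split=> //.
by rewrite wordsS size_cat !size_map IHn1 IHn.
Qed.

Lemma mem_words_weight s : s \in words (weight s).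
Proof.
have cons_inj b : injective (cons b : seq bool -> _) by move=> ? ? [].
elim: s => [|[] s IH]; first by rewrite /weight big_nil.
- by rewrite weight_cons wordsS mem_cat (mem_map (cons_inj _)) IH.
- by rewrite weight_cons wordsS mem_cat (mem_map (cons_inj _)) IH orbT.
Qed.

Definition interleave (ps : seq (bool * bool)) : seq bool :=
  flatten [seq [:: p.1; p.2] | p <- ps].

Lemma interleave_marker_inj ps1 ps2 r1 r2 :
  (true, false) \notin ps1 -> (true, false) \notin ps2 ->
  interleave ps1 ++ true :: false :: r1 = interleave ps2 ++ true :: false :: r2 ->
  ps1 = ps2 /\ r1 = r2.
Proof.
elim: ps1 ps2 => [|[a b] ps1 IH] [|[c d] ps2] //=; rewrite ?inE ?negb_or.
- by move=> _ _ [->].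
- by move=> _ /andP [tf _] [ec ed]; subst c d; rewrite eqxx in tf.
- by move=> /andP [tf _] _ [ea eb]; subst a b; rewrite eqxx in tf.
- by move=> /andP [_ ps1P] /andP [_ ps2P] [-> -> /(IH _ ps1P ps2P) [-> ->]].
Qed.

Lemma weight_interleave (f g : nat -> bool) s :
  weight (interleave [seq (f b, g b) | b <- s]) =
  \sum_(b <- s) letter_weight (f b) + \sum_(b <- s) letter_weight (g b).
Proof.
elim: s => [|b s IH]; first by rewrite !big_nil /weight big_nil.
by rewrite /= weight_cat -/(interleave _) IH !big_cons !weight_cons /weight big_nil /=; lia.
Qed.

Definition shift_pairs (x : nat -> bool) (P n : nat) : seq (bool * bool) :=
  [seq (x b, x (b + P)) | b <- index_iota 1 n.+1].

(* Satisfied by the bits x_i = [m + i \in S], 0 < i <= k = F - m - 1, and any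
   pseudo-Frobenius number P with m + P < F. *)
Definition admissible (x : nat -> bool) (P k : nat) : Prop :=
  [/\ 0 < P, P <= k, x P, ~~ x (k.+1 - P) &
      forall b, 0 < b -> b + P <= k -> x b -> x (b + P)].

Lemma admissible_no_marker x P k n :
  admissible x P k -> n + P <= k -> (true, false) \notin shift_pairs x P n.
Proof.
case=> _ _ _ _ closed nP; apply/mapP=> -[b]; rewrite mem_index_iota => bn [xb xbP].
have : x (b + P) by apply: closed; rewrite -?xb //; lia.
by rewrite -xbP.
Qed.

Lemma weight_shift_pairs x P n :
  weight (interleave (shift_pairs x P n)) =
  \sum_(1 <= i < n.+1) letter_weight (x i) + \sum_(P.+1 <= i < n.+1 + P) letter_weight (x i).
Proof. by rewrite weight_interleave -[P.+1]add1n big_addn addnK. Qed.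

(* If l < P the marker stands for x_P = 1 and
   x_l = 0 and the leading 0 1 flags the case; otherwise the leading 1 flags it.
   Either way the weight exceeds that of x_1 .. x_k by 3. *)
Definition pair_code (x : nat -> bool) (P k : nat) : seq bool :=
  let l := k.+1 - P in
  if l < P then
    false :: true :: interleave (shift_pairs x P l.-1) ++
    true :: false :: [seq x i | i <- index_iota l.+1 P]
  else
    true :: interleave (shift_pairs x P P.-1) ++
    true :: false :: [seq x i | i <- index_iota (P + P) k.+1].

Lemma map_iota_inj (T : Type) (f g : nat -> T) a n1 n2 :
  [seq f i | i <- iota a n1] = [seq g i | i <- iota a n2] ->
  n1 = n2 /\ forall i, a <= i < a + n1 -> f i = g i.
Proof.
move=> E; have n12 : n1 = n2 by have := congr1 size E; rewrite !size_map !size_iota.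
subst n2; split=> // i ia.
by move/eq_in_map: E => /(_ i); apply; rewrite mem_iota.
Qed.

Lemma shift_cover_short (x1 x2 : nat -> bool) l P :
  l < P -> x1 l = x2 l -> x1 P = x2 P ->
  (forall b, 0 < b < l -> (x1 b, x1 (b + P)) = (x2 b, x2 (b + P))) ->
  (forall i, l < i < P -> x1 i = x2 i) ->
  forall i, 0 < i < l + P -> x1 i = x2 i.
Proof.
move=> lP xl xP pairs_eq tail_eq i /andP [i0 ilP].
have [iP|Pi] := ltnP i P.
  have [il|li] := ltnP i l; first by have /pairs_eq [] : 0 < i < l by rewrite i0.
  by case: (eqVneq i l) => [-> //|il]; apply: tail_eq; lia.
case: (eqVneq i P) => [-> //|iP].
have /pairs_eq [_] : 0 < i - P < l by lia.
by rewrite subnK.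
Qed.

Lemma shift_cover_long (x1 x2 : nat -> bool) P k :
  P + P <= k.+1 -> x1 P = x2 P ->
  (forall b, 0 < b < P -> (x1 b, x1 (b + P)) = (x2 b, x2 (b + P))) ->
  (forall i, P + P <= i <= k -> x1 i = x2 i) ->
  forall i, 0 < i <= k -> x1 i = x2 i.
Proof.
move=> Pk xP pairs_eq tail_eq i /andP [i0 ik].
have [iP|Pi] := ltnP i P.
  by have /pairs_eq [] : 0 < i < P by rewrite i0.
case: (eqVneq i P) => [-> //|iP].
have [iPP|PPi] := ltnP i (P + P); last by apply: tail_eq; rewrite PPi.
have /pairs_eq [_] : 0 < i - P < P by lia.
by rewrite subnK.
Qed.

Lemma pair_code_inj x1 P1 k1 x2 P2 k2 :
  admissible x1 P1 k1 -> admissible x2 P2 k2 ->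
  pair_code x1 P1 k1 = pair_code x2 P2 k2 ->
  [/\ P1 = P2, k1 = k2 & forall i, 0 < i <= k1 -> x1 i = x2 i].
Proof.
move=> A1 A2; have [P1_gt0 P1k xP1 xl1 _] := A1; have [P2_gt0 P2k xP2 xl2 _] := A2.
rewrite /pair_code; case: ltnP => c1; case: ltnP => c2 [] //.
- move/interleave_marker_inj => [||epairs etail].
  + by apply: admissible_no_marker A1 _; lia.
  + by apply: admissible_no_marker A2 _; lia.
  have [el pairs_eq] := map_iota_inj epairs.
  have el12 : k2.+1 - P2 = k1.+1 - P1 by lia.
  rewrite el12 in etail xl2; have [eP tail_eq] := map_iota_inj etail.
  have eP12 : P2 = P1 by lia.
  have ek12 : k2 = k1 by lia.
  subst P2 k2; split=> // i i_range.
  apply: (@shift_cover_short _ _ (k1.+1 - P1) P1) => //; last lia.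
  - by rewrite (negbTE xl1) (negbTE xl2).
  - by rewrite xP1 xP2.
  - by move=> b b_range; apply: pairs_eq; lia.
  - by move=> j j_range; apply: tail_eq; lia.
- move/interleave_marker_inj => [||epairs etail].
  + by apply: admissible_no_marker A1 _; lia.
  + by apply: admissible_no_marker A2 _; lia.
  have [eP pairs_eq] := map_iota_inj epairs.
  have eP12 : P2 = P1 by lia.
  subst P2; have [ek tail_eq] := map_iota_inj etail.
  have ek12 : k2 = k1 by lia.
  subst k2; split=> // i i_range.
  apply: (@shift_cover_long _ _ P1 k1) => //.
  - lia.
  - by rewrite xP1 xP2.
  - by move=> b b_range; apply: pairs_eq; lia.
  - by move=> j j_range; apply: tail_eq; lia.
Qed.

Lemma weight_pair_code x P k : admissible x P k ->
  weight (pair_code x P k) = \sum_(1 <= i < k.+1) letter_weight (x i) + 3.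
Proof.
case=> P_gt0 Pk xP xl _; rewrite /pair_code; move: xl; move El: (k.+1 - P) => l xl.
case: ltnP => c; rewrite !(weight_cons, weight_cat) weight_shift_pairs weight_map_index_iota.
- rewrite prednK; last lia.
  have -> : l + P = k.+1 by lia.
  rewrite (@big_cat_nat _ _ _ l 1 k.+1) ?(@big_ltn _ _ _ l k.+1) /=; try lia.
  rewrite (@big_cat_nat _ _ _ P l.+1 k.+1) ?(@big_ltn _ _ _ P k.+1) /=; try lia.
  by rewrite xP (negbTE xl) /=; lia.
- rewrite prednK //.
  rewrite (@big_cat_nat _ _ _ P 1 k.+1) ?(@big_ltn _ _ _ P k.+1) /=; try lia.
  rewrite (@big_cat_nat _ _ _ (P + P) P.+1 k.+1) /=; try lia.
  by rewrite xP /=; lia.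
Qed.

Lemma frob_max H h : h \in H -> h <= frob H.
Proof. by move=> hH; rewrite /frob (leq_bigmax_seq (F := fun i => i)). Qed.

Lemma frob_lt_notin H h : frob H < h -> h \notin H.
Proof. by apply: contraTN => /frob_max; rewrite -leqNgt. Qed.

Lemma frob_mem H : 0 < frob H -> frob H \in H.
Proof.
case: H => [|h H _]; first by rewrite /frob big_nil.
rewrite /frob big_cons.
elim: H h => [|h' H IH] h; first by rewrite big_nil maxn0 mem_head.
rewrite big_cons maxnA; have := IH (maxn h h'); rewrite !inE.
by case: (leqP h h') => _ /orP [/eqP ->|->]; rewrite ?eqxx ?orbT.
Qed.

Lemma mult_spec H :
  [/\ 0 < mult H, mult H \notin H & forall i, 0 < i < mult H -> i \in H].
Proof.
rewrite /mult; set p := fun n => (0 < n) && (n \notin H).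
have hasp : has p (iota 0 (frob H).+2).
  apply/hasP; exists (frob H).+1; first by rewrite mem_iota; lia.
  by rewrite /p frob_lt_notin.
have find_lt : find p (iota 0 (frob H).+2) < (frob H).+2.
  by rewrite -[X in _ < X](size_iota 0) -has_find.
have := nth_find 0 hasp; rewrite nth_iota // => /andP [-> ->].
split=> // i /andP [i_gt0 lt_i_find].
have := before_find 0 lt_i_find; rewrite nth_iota; last exact: ltn_trans find_lt.
by rewrite /p i_gt0 => /negbFE.
Qed.

Lemma pseudo_frob_addr H P s :
  pseudo_frob H P -> 0 < s -> s \notin H -> P + s \notin H.
Proof.
case/andP=> _ /allP pf s_gt0 sS.
have [sF|Fs] := leqP s (frob H); last by apply: frob_lt_notin; lia.
have /pf : s \in iota 1 (frob H) by rewrite mem_iota; lia.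
by rewrite (negbTE sS).
Qed.

Lemma gapset_uniq H : is_gapset H -> uniq H.
Proof. by case=> sortedH _ _; apply: sorted_uniq sortedH; [apply: ltn_trans | apply: ltnn]. Qed.

Lemma size_gapset H : is_gapset H -> mult H < frob H ->
  size H = mult H + count (fun i => mult H + i \in H) (iota 1 (frob H - mult H - 1)).
Proof.
move=> gapH mF; have [m_gt0 mS lt_m_gap] := mult_spec H.
have FH : frob H \in H by apply: frob_mem; lia.
have -> : size H = count (fun h => h \in H) (iota 1 (frob H)).
  rewrite -size_filter; apply/perm_size/uniq_perm.
  - exact: gapset_uniq.
  - by apply: filter_uniq; apply: iota_uniq.
  move=> h; rewrite mem_filter mem_iota add1n ltnS.
  have [hH|//] := boolP (h \in H); rewrite /= frob_max // andbT lt0n; symmetry.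
  by apply: contraTneq hH => ->; case: gapH.
rewrite [in LHS](_ : frob H = (mult H).-1 + (1 + (frob H - mult H - 1 + 1))); last lia.
rewrite !iotaD !count_cat add1n prednK // -addnA iotaDl count_map.
rewrite (@eq_in_count _ _ predT) ?count_predT ?size_iota; last first.
  by move=> i; rewrite mem_iota => i_range; apply: lt_m_gap; lia.
have count1 x : count (fun h => h \in H) [:: x] = (x \in H) by rewrite /= addn0.
have -> : mult H + (1 + (frob H - mult H - 1)) = frob H by lia.
by rewrite !count1 (negbTE mS) FH (@eq_count _ _ (fun i => mult H + i \in H)) //; lia.
Qed.

Lemma eq_gapset H1 H2 : is_gapset H1 -> is_gapset H2 ->
  mult H1 = mult H2 -> frob H1 = frob H2 -> mult H1 < frob H1 ->
  (forall i, 0 < i < frob H1 - mult H1 -> (mult H1 + i \in H1) = (mult H1 + i \in H2)) ->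
  H1 = H2.
Proof.
move=> gapH1 gapH2 em eF mF between.
have [_ mS1 lt_m_gap1] := mult_spec H1; have [_ mS2 lt_m_gap2] := mult_spec H2.
case: (gapH1) (gapH2) => sorted1 zero1 _ [sorted2 zero2 _].
apply: (irr_sorted_eq ltn_trans ltnn) sorted1 sorted2 _ => i.
have [-> | i_gt0] := posnP i; first by rewrite (negbTE zero1) (negbTE zero2).
have [im|mi] := ltnP i (mult H1); first by rewrite !lt_m_gap1 ?lt_m_gap2 ?i_gt0 -?em.
case: (eqVneq i (mult H1)) => [->|im]; first by rewrite (negbTE mS1) em (negbTE mS2).
have [iF|Fi] := ltnP i (frob H1).
  by have := between (i - mult H1); rewrite subnKC //; apply; lia.
case: (eqVneq i (frob H1)) => [->|iF]; first by rewrite frob_mem ?eF ?frob_mem //; lia.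
have F1i : frob H1 < i by lia.
have F2i : frob H2 < i by rewrite -eF.
by rewrite (negbTE (frob_lt_notin F1i)) (negbTE (frob_lt_notin F2i)).
Qed.

Lemma count_sub_le (T : Type) (a b : pred T) s :
  count a s - count b s <= count (predI a (predC b)) s.
Proof. by elim: s => //= x s IH; case: (a x); case: (b x) => /=; lia. Qed.

Definition t2_pseudo_frob (H : seq nat) (P : nat) : bool :=
  pseudo_frob H P && ~~ ((frob H + 1 - mult H <= P) && (P <= frob H)).

Lemma t2_le_count H : t2 H <= count (t2_pseudo_frob H) H.
Proof. exact: count_sub_le. Qed.

Definition above_mult (H : seq nat) (i : nat) : bool := mult H + i \notin H.

Lemma t2_pseudo_frob_admissible H P : is_gapset H -> t2_pseudo_frob H P ->
  mult H + P < frob H /\ admissible (above_mult H) P (frob H - mult H - 1).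
Proof.
case=> _ zeroH _ /andP [pfP not_t1]; have PH : P \in H by case/andP: pfP.
have [m_gt0 mS _] := mult_spec H.
have P_gt0 : 0 < P by rewrite lt0n; apply: contraTneq PH => ->.
have PF := frob_max PH.
have FH : frob H \in H by apply: frob_mem; lia.
have mPS : mult H + P \notin H by rewrite addnC pseudo_frob_addr.
have mPF : mult H + P < frob H.
  rewrite ltn_neqAle; apply/andP; split; first by apply: contraNneq mPS => ->.
  by move: not_t1; rewrite PF andbT -ltnNge; lia.
split=> //; split=> //; rewrite /above_mult; first lia.
- have -> : mult H + ((frob H - mult H - 1).+1 - P) = frob H - P by lia.
  rewrite negbK; apply: contraLR FH => FPS.
  by rewrite -(subnKC PF) pseudo_frob_addr //; lia.
- move=> b _ _ mbS; rewrite addnA addnC; apply: pseudo_frob_addr mbS => //; lia.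
Qed.

Definition encode (H : seq nat) (P : nat) : seq bool :=
  pair_code (above_mult H) P (frob H - mult H - 1) ++
  false :: nseq (2 * mult H - frob H - 1) true.

Lemma weight_encode H P : is_gapset H -> frob H < 2 * mult H ->
  t2_pseudo_frob H P -> weight (encode H P) = size H + 3.
Proof.
move=> gapH F2m tP; have [mPF adm] := t2_pseudo_frob_admissible gapH tP.
rewrite size_gapset //; last lia.
rewrite /encode weight_cat weight_pair_code // weight_cons weightE size_nseq count_nseq.
rewrite -weight_map_index_iota weightE size_map count_map /index_iota subn1 /= size_iota.
rewrite (@eq_count _ _ (fun i => mult H + i \in H)) => [|i]; last by rewrite /= /above_mult negbK.
by rewrite mul0n addn0; set c := count _ _; lia.
Qed.

Lemma cat_false_nseq_inj s1 s2 c1 c2 :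
  s1 ++ false :: nseq c1 true = s2 ++ false :: nseq c2 true -> s1 = s2 /\ c1 = c2.
Proof.
move/(congr1 rev); rewrite !rev_cat !rev_cons !rev_nseq !cat_rcons.
elim: c1 c2 => [|c1 IH] [|c2] //= [].
- by move/(congr1 rev); rewrite !revK.
- by move/IH => [-> ->].
Qed.

Lemma encode_inj H1 H2 P1 P2 : is_gapset H1 -> is_gapset H2 ->
  frob H1 < 2 * mult H1 -> frob H2 < 2 * mult H2 ->
  t2_pseudo_frob H1 P1 -> t2_pseudo_frob H2 P2 ->
  encode H1 P1 = encode H2 P2 -> H1 = H2 /\ P1 = P2.
Proof.
move=> gapH1 gapH2 F2m1 F2m2 tP1 tP2.
have [mPF1 adm1] := t2_pseudo_frob_admissible gapH1 tP1.
have [mPF2 adm2] := t2_pseudo_frob_admissible gapH2 tP2.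
rewrite /encode => /cat_false_nseq_inj [/(pair_code_inj adm1 adm2) [eP ek agree] ec].
have em : mult H1 = mult H2 by lia.
have eF : frob H1 = frob H2 by lia.
split=> //; apply: eq_gapset => // [|i i_range]; first lia.
by apply: negb_inj; rewrite [in RHS]em; apply: agree; lia.
Qed.

Theorem lemma5p1 (g : nat) (L : seq (seq nat)) :
  uniq L -> (forall H, H \in L -> in_B g H) ->
  \sum_(H <- L) t2 H <= fib (g + 4).
Proof.
move=> uniqL inBL.
have inB_facts H P : H \in L -> t2_pseudo_frob H P ->
    [/\ is_gapset H, frob H < 2 * mult H & size H = g].
  move=> /inBL [gapH sizeH [H0|//]] /andP [/andP [PH _] _].
  by rewrite H0 in PH.
pose codes := [seq encode H P | H <- L, P <- filter (t2_pseudo_frob H) H].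
have size_codes : \sum_(H <- L) t2 H <= size codes.
  rewrite size_allpairs_dep sumnE big_map; apply: leq_sum => H _.
  by rewrite size_filter t2_le_count.
have uniq_codes : uniq codes.
  apply: allpairs_uniq_dep => // [H HL | [H1 P1] [H2 P2]].
    by apply: filter_uniq; apply: gapset_uniq; case: (inBL H HL).
  move=> /allpairsPdep [H1' [P1' [H1L]]]; rewrite mem_filter => /andP [tP1 _] [-> ->].
  move=> /allpairsPdep [H2' [P2' [H2L]]]; rewrite mem_filter => /andP [tP2 _] [-> ->] /=.
  have [gapH1 F2m1 _] := inB_facts _ _ H1L tP1.
  have [gapH2 F2m2 _] := inB_facts _ _ H2L tP2.
  by case/(encode_inj gapH1 gapH2 F2m1 F2m2 tP1 tP2) => -> ->.
have codes_sub : {subset codes <= words (g + 3)}.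
  move=> w /allpairsPdep [H [P [HL]]]; rewrite mem_filter => /andP [tP _] ->.
  have [gapH F2m sizeH] := inB_facts _ _ HL tP.
  by rewrite -sizeH -(weight_encode gapH F2m tP) mem_words_weight.
by rewrite addnS -size_words (leq_trans size_codes) ?uniq_leq_size.
Qed.
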